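(* Let $m,n$ be positive integers and let $K_{m,n}$ be the complete bipartite graph with part sizes $m$ and $n$. Then the number of shellings of $K_{m,n}$ is $$F(K_{m,n})=\frac{m!\,n!\,(mn)!}{(m+n-1)!}.$$
   Context: For a finite undirected graph $G=(V,E)$, a shelling of $G$ is a total ordering $\sigma(1),\sigma(2),\ldots,\sigma(|E|)$ of the edge set $E$ such that for every $k=1,\ldots,|E|$ the edges $\sigma(1),\ldots,\sigma(k)$ form a connected subgraph of $G$. $F(G)$ denotes the number of shellings of $G$. *)

From mathcomp Require Import all_boot.
Set Implicit Arguments. Unset Strict Implicit. Unset Printing Implicit Defensive.

(* A finite simple graph on vertex type T is given by its edge set
   E : {set {set T}}, each edge being a 2-element subset of T. *)

Definition edge_adj (T : finType) (S : seq {set T}) : rel T :=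
  fun u v => (u != v) && ([set u; v] \in S).

Definition subgraph_vertices (T : finType) (S : seq {set T}) : {set T} :=
  \bigcup_(e <- S) e.

Definition edges_connected (T : finType) (S : seq {set T}) : bool :=
  [forall u in subgraph_vertices S, forall v in subgraph_vertices S,
     connect (edge_adj S) u v].

Definition is_shelling (T : finType) (E : {set {set T}}) (s : seq {set T}) : bool :=
  [&& uniq s, size s == #|E|, all (fun e => e \in E) s &
      [forall k : 'I_#|E|, edges_connected (take k.+1 s)]].

Definition num_shellings (T : finType) (E : {set {set T}}) : nat :=
  #|[set t : #|E|.-tuple {set T} | is_shelling E t]|.

Definition Kmn_edges (m n : nat) : {set {set ('I_m + 'I_n)%type}} :=
  [set [set inl i; inr j] | i : 'I_m, j : 'I_n].

From mathcomp Require Import all_boot zify ring.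
Set Implicit Arguments. Unset Strict Implicit. Unset Printing Implicit Defensive.

(* Write the edges of K_{m,n} as pairs (i, j) of a row and a column.  Appending
   an edge to a connected edge list keeps it connected iff the edge shares an
   endpoint with it, so a shelling is a sequence of distinct pairs each sharing
   a row or a column with an earlier one.  The number of ways to complete such
   a prefix that uses a rows and b columns, with r edges still to place, only
   depends on (a, b, r) and equals
       r! (a+n-1)! (b+m-1)! / ((a+b-1)! (m+n-1)!).
   This follows by induction on r: of the admissible next edges, ab - k stay
   inside the used rows and columns, a(n-b) open a new column and (m-a)b open a
   new row, and the closed form satisfies the resulting recurrence.  Summing
   over the mn choices of a first edge (a = b = 1, r = mn-1) gives the formula. *)

Section TupleCounting.
Variables A B : finType.

Lemma card_tuples_cons r (Q : pred (seq A)) :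
  #|[set t : r.+1.-tuple A | Q t]| = \sum_(x : A) #|[set t : r.-tuple A | Q (x :: t)]|.
Proof.
under eq_bigr do rewrite -sum1dep_card.
rewrite pair_big_dep -sum1dep_card.
rewrite (reindex (fun p : A * r.-tuple A => [tuple of p.1 :: p.2])) //=.
exists (fun t => (thead t, behead_tuple t)) => [[x t] _ | t _] /=.
  by congr pair; apply: val_inj.
by rewrite -tuple_eta.
Qed.

Lemma card_tuples_map r (f : A -> B) (Q : pred (seq B)) :
  injective f -> (forall t, Q t -> {subset t <= codom f}) ->
  #|[set t : r.-tuple B | Q t]| = #|[set u : r.-tuple A | Q (map f u)]|.
Proof.
move=> f_inj Q_codom.
have map_inj : injective (@map_tuple r _ _ f).
  by move=> u v /(congr1 val) /(inj_map f_inj) /val_inj.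
rewrite -(card_imset _ map_inj); apply: eq_card => t; rewrite inE.
apply/idP/imsetP => [Qt | [u] /[!inE] Qu -> //].
have t_preim : map f (preim_seq f t) = t by apply: map_preim => y /(Q_codom _ Qt).
have size_preim : size (preim_seq f t) == r by rewrite -(size_map f) t_preim size_tuple.
by exists (Tuple size_preim); [rewrite inE /= t_preim | apply: val_inj].
Qed.

End TupleCounting.

Section EdgeListConnectivity.
Variable T : finType.
Implicit Types (S : seq {set T}) (u v : T).

Lemma edge_adj_sym S : symmetric (edge_adj S).
Proof. by move=> u v; rewrite /edge_adj eq_sym setUC. Qed.

Lemma subgraph_vertices_cat S1 S2 :
  subgraph_vertices (S1 ++ S2) = subgraph_vertices S1 :|: subgraph_vertices S2.
Proof. exact: big_cat. Qed.

Lemma subgraph_vertices_seq1 (e : {set T}) : subgraph_vertices [:: e] = e.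
Proof. exact: big_seq1. Qed.

Lemma edge_sub_vertices S e : e \in S -> e \subset subgraph_vertices S.
Proof. by move=> eS; rewrite /subgraph_vertices bigcup_seq (bigcup_sup e). Qed.

Lemma connect_edge_adj_sub S1 S2 : {subset S1 <= S2} ->
  subrel (connect (edge_adj S1)) (connect (edge_adj S2)).
Proof.
move=> sub12; apply: connect_sub => u v /andP[neq_uv uv_S1].
by apply: connect1; rewrite /edge_adj neq_uv sub12.
Qed.

Lemma edges_connected1 u v : edges_connected [:: [set u; v]].
Proof.
have adj_uv : u != v -> edge_adj [:: [set u; v]] u v by rewrite /edge_adj mem_seq1 eqxx => ->.
have conn_uv : connect (edge_adj [:: [set u; v]]) u v.
  by have [-> | /adj_uv/connect1] := eqVneq u v; first exact: connect0.
have conn_sym := sym_connect_sym (@edge_adj_sym [:: [set u; v]]).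
apply/forall_inP => x; rewrite subgraph_vertices_seq1 => /set2P[]-> ;
apply/forall_inP => y /set2P[]->; by rewrite ?connect0 ?conn_uv // conn_sym.
Qed.

Lemma edges_connected_cat S1 S2 :
  edges_connected S1 -> edges_connected S2 ->
  ~~ [disjoint subgraph_vertices S1 & subgraph_vertices S2] ->
  edges_connected (S1 ++ S2).
Proof.
move=> /forall_inP conn1 /forall_inP conn2 /pred0Pn[w /andP[w1 w2]].
have conn_sym := sym_connect_sym (@edge_adj_sym (S1 ++ S2)).
have to_w x : x \in subgraph_vertices (S1 ++ S2) -> connect (edge_adj (S1 ++ S2)) x w.
  have sub1 : {subset S1 <= S1 ++ S2} by move=> e e1; rewrite mem_cat e1.
  have sub2 : {subset S2 <= S1 ++ S2} by move=> e e2; rewrite mem_cat e2 orbT.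
  rewrite subgraph_vertices_cat => /setUP[x1 | x2].
    by apply: (connect_edge_adj_sub sub1); apply: (forall_inP (conn1 x x1)).
  by apply: (connect_edge_adj_sub sub2); apply: (forall_inP (conn2 x x2)).
apply/forall_inP => x /to_w xw; apply/forall_inP => y /to_w yw.
by rewrite (connect_trans xw) // conn_sym.
Qed.

Lemma edges_disconnected_cat S1 S2 :
  subgraph_vertices S1 != set0 -> subgraph_vertices S2 != set0 ->
  [disjoint subgraph_vertices S1 & subgraph_vertices S2] ->
  ~~ edges_connected (S1 ++ S2).
Proof.
move=> /set0Pn[x x1] /set0Pn[y y2] disj12.
have closed1 : closed (edge_adj (S1 ++ S2)) (subgraph_vertices S1).
  move=> u v /andP[_]; rewrite mem_cat => /orP[] /edge_sub_vertices/subsetP uv_sub.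
    by rewrite !uv_sub ?set21 ?set22.
  by rewrite !(disjointFl disj12) ?uv_sub ?set21 ?set22.
have xV : x \in subgraph_vertices (S1 ++ S2) by rewrite subgraph_vertices_cat inE x1.
have yV : y \in subgraph_vertices (S1 ++ S2) by rewrite subgraph_vertices_cat inE y2 orbT.
apply/negP => /forall_inP/(_ x xV)/forall_inP/(_ y yV)/(closed_connect closed1).
by rewrite x1 (disjointFl disj12).
Qed.

Lemma edges_connected_catE S1 S2 :
  edges_connected S1 -> edges_connected S2 ->
  subgraph_vertices S1 != set0 -> subgraph_vertices S2 != set0 ->
  edges_connected (S1 ++ S2) = ~~ [disjoint subgraph_vertices S1 & subgraph_vertices S2].
Proof.
move=> conn1 conn2 nz1 nz2; apply/idP/idP; last exact: edges_connected_cat.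
by apply: contraLR; rewrite negbK; apply: edges_disconnected_cat.
Qed.

End EdgeListConnectivity.

Lemma disjoint_set2 (T : finType) (u v : T) (A : {set T}) :
  [disjoint [set u; v] & A] = (u \notin A) && (v \notin A).
Proof. by rewrite disjoints_subset subUset !sub1set !inE. Qed.

Lemma all_iota0S N (F : pred nat) :
  all F (iota 0 N.+1) = F 0 && all (fun k => F k.+1) (iota 0 N).
Proof. by rewrite /= -(addn0 1) iotaDl all_map. Qed.

Lemma forall_ord_iota N (F : pred nat) : [forall k : 'I_N, F k] = all F (iota 0 N).
Proof.
apply/forallP/allP => [all_F k | all_F k]; last by apply: all_F; rewrite mem_iota ltn_ord.
by rewrite mem_iota => /andP[_ lt_kN]; exact: all_F (Ordinal lt_kN).
Qed.

Lemma fact_predn k : 0 < k -> k`! = k * k.-1`!.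
Proof. by case: k. Qed.

Lemma move_weight_identity a b k m n : k <= a * b -> a <= m -> b <= n ->
  (a * b - k) * (a + b) + a * (n - b) * (b + m) + (m - a) * b * (a + n) =
  (a + b) * (m * n - k).
Proof.
move=> /subnK abE /subnK mE /subnK nE.
move: (a * b - k) (m - a) (n - b) abE mE nE => c m' n' abE <- <-.
have -> : (m' + a) * (n' + b) - k = c + m' * b + a * n' + m' * n' by nia.
ring.
Qed.

Section CompleteBipartite.
Variables m n : nat.
Local Notation P := ('I_m * 'I_n)%type.
Implicit Types (s pre : seq P) (x : P).

Definition Kmn_edge x : {set 'I_m + 'I_n} := [set inl x.1; inr x.2].

Lemma Kmn_edge_inj : injective Kmn_edge.
Proof.
move=> [i j] [i' j'] /setP eq_e.
have := eq_e (inl i); have := eq_e (inr j); rewrite !inE !eqxx /=.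
by move=> /esym/eqP[->] /esym/orP[/eqP[->] | /eqP].
Qed.

Lemma Kmn_edgesE : Kmn_edges m n = Kmn_edge @: setT.
Proof.
apply/setP => e; apply/imset2P/imsetP => [[i j _ _ ->] | [[i j] _ ->]].
  by exists (i, j).
by exists i j.
Qed.

Lemma card_Kmn_edges : #|Kmn_edges m n| = m * n.
Proof.
by rewrite Kmn_edgesE card_imset ?cardsT ?card_prod ?card_ord //; apply: Kmn_edge_inj.
Qed.

Lemma Kmn_edges_codom : {subset Kmn_edges m n <= codom Kmn_edge}.
Proof. by rewrite Kmn_edgesE => e /imsetP[x _ ->]; apply: codom_f. Qed.

Definition rows s : {set 'I_m} := [set i in map fst s].
Definition cols s : {set 'I_n} := [set j in map snd s].
Definition touches s x := (x.1 \in rows s) || (x.2 \in cols s).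

Lemma mem_rows pre x : x \in pre -> x.1 \in rows pre.
Proof. by move=> x_pre; rewrite inE map_f. Qed.

Lemma mem_cols pre x : x \in pre -> x.2 \in cols pre.
Proof. by move=> x_pre; rewrite inE map_f. Qed.

Lemma rows_rcons pre x : rows (rcons pre x) = x.1 |: rows pre.
Proof. by apply/setP => i; rewrite !inE map_rcons mem_rcons inE. Qed.

Lemma cols_rcons pre x : cols (rcons pre x) = x.2 |: cols pre.
Proof. by apply/setP => j; rewrite !inE map_rcons mem_rcons inE. Qed.

Lemma rows_cols_gt0 pre : pre != [::] -> 0 < #|rows pre| /\ 0 < #|cols pre|.
Proof.
case: pre => [|x pre] // _.
by split; apply/card_gt0P; [exists x.1; apply: mem_rows | exists x.2; apply: mem_cols];
  rewrite mem_head.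
Qed.

Lemma rows_cols_le pre : #|rows pre| <= m /\ #|cols pre| <= n.
Proof. by split; rewrite -[X in _ <= X]card_ord max_card. Qed.

Lemma size_le_rows_cols pre : uniq pre -> size pre <= #|rows pre| * #|cols pre|.
Proof.
move=> uniq_pre; rewrite -cardsX -(card_uniqP uniq_pre); apply: subset_leq_card.
by apply/subsetP => x x_pre; rewrite inE mem_rows ?mem_cols.
Qed.

Lemma inl_Kmn_vertices s i :
  (inl i \in subgraph_vertices (map Kmn_edge s)) = (i \in rows s).
Proof.
rewrite /subgraph_vertices big_map bigcup_seq inE.
apply/bigcupP/mapP => [[x xs] | [x xs ->]]; last by exists x; rewrite ?inE ?eqxx.
by rewrite !inE /= orbF => /eqP[->]; exists x.
Qed.

Lemma inr_Kmn_vertices s j :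
  (inr j \in subgraph_vertices (map Kmn_edge s)) = (j \in cols s).
Proof.
rewrite /subgraph_vertices big_map bigcup_seq inE.
apply/bigcupP/mapP => [[x xs] | [x xs ->]]; last by exists x; rewrite ?inE ?eqxx ?orbT.
by rewrite !inE /= => /eqP[->]; exists x.
Qed.

Lemma Kmn_connected_rcons s x : s != [::] ->
  edges_connected (map Kmn_edge s) ->
  edges_connected (map Kmn_edge (rcons s x)) = touches s x.
Proof.
case: s => [|y s] // _ conn_s.
rewrite map_rcons -cats1 edges_connected_catE ?edges_connected1 //; last 2 first.
- by apply/set0Pn; exists (inl y.1); rewrite inl_Kmn_vertices inE mem_head.
- by apply/set0Pn; exists (inl x.1); rewrite subgraph_vertices_seq1 set21.
by rewrite subgraph_vertices_seq1 disjoint_sym disjoint_set2 negb_and !negbK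
  inl_Kmn_vertices inr_Kmn_vertices.
Qed.

Fixpoint shelling_from (pre s : seq P) : bool :=
  if s is x :: s' then [&& x \notin pre, touches pre x & shelling_from (rcons pre x) s']
  else true.

Lemma shelling_fromE pre s : pre != [::] -> uniq pre ->
  edges_connected (map Kmn_edge pre) ->
  shelling_from pre s = uniq (pre ++ s) &&
    all (fun k => edges_connected (map Kmn_edge (pre ++ take k s))) (iota 0 (size s).+1).
Proof.
elim: s pre => [|x s IHs] pre nz_pre uniq_pre conn_pre.
  by rewrite /= !cats0 uniq_pre conn_pre.
rewrite [shelling_from _ _]/= [size _]/= all_iota0S take0 cats0 conn_pre.
have [x_pre | x_notin] := boolP (x \in pre).
  by rewrite -cat_rcons cat_uniq rcons_uniq x_pre.
have conn_rcons := Kmn_connected_rcons x nz_pre conn_pre.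
under eq_all do rewrite [take _ _]/= -cat_rcons.
case touch: (touches pre x); last first.
  by rewrite all_iota0S take0 cats0 conn_rcons touch andFb !andbF.
by rewrite -cat_rcons IHs ?rcons_uniq ?x_notin ?conn_rcons //; case: (pre).
Qed.

Lemma is_shelling_Kmn x s :
  is_shelling (Kmn_edges m n) (map Kmn_edge (x :: s)) =
  ((size s).+1 == m * n) && shelling_from [:: x] s.
Proof.
rewrite /is_shelling (map_inj_uniq Kmn_edge_inj) size_map card_Kmn_edges.
have -> : all (fun e => e \in Kmn_edges m n) (map Kmn_edge (x :: s)).
  by apply/allP => _ /mapP[y _ ->]; rewrite Kmn_edgesE imset_f.
case: eqP => [size_s | _]; last by rewrite andFb andbF.
rewrite -size_s.
rewrite (forall_ord_iota _ (fun k => edges_connected (take k.+1 (map Kmn_edge (x :: s))))).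
rewrite shelling_fromE ?edges_connected1 //; congr (_ && _); apply: eq_all => k.
by rewrite /= map_take.
Qed.

Definition ext_count pre r := #|[set t : r.-tuple P | shelling_from pre t]|.

Lemma ext_count0 pre : ext_count pre 0 = 1.
Proof.
rewrite /ext_count -[1](card_tuple 0 P) -cardsT; apply: eq_card => t.
by rewrite !inE tuple0.
Qed.

Lemma ext_countS pre r :
  ext_count pre r.+1 = \sum_(x | (x \notin pre) && touches pre x) ext_count (rcons pre x) r.
Proof.
rewrite /ext_count card_tuples_cons [RHS]big_mkcond; apply: eq_bigr => x _.
case: ifP => valid; first by apply: eq_card => t; rewrite !inE /= andbA valid.
by apply/eqP; rewrite cards_eq0; apply/eqP/setP => t; rewrite !inE /= andbA valid.
Qed.

(* (a+b) times the ratio of the closed forms, at equal r, after and before the move. *)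
Definition move_weight pre x :=
  if x.2 \in cols pre then
    if x.1 \in rows pre then #|rows pre| + #|cols pre| else #|rows pre| + n
  else #|cols pre| + m.

Lemma sum_move_weight pre : uniq pre ->
  \sum_(x | (x \notin pre) && touches pre x) move_weight pre x =
  (#|rows pre| + #|cols pre|) * (m * n - size pre).
Proof.
move=> uniq_pre; rewrite big_mkcond /= /touches /move_weight.
set R := rows pre; set C := cols pre.
have in_pre y : (y \in [set y in pre]) = (y \in pre) by rewrite inE.
transitivity (\sum_x ((if x \in setX R C :\: [set y in pre] then #|R| + #|C| else 0) +
    (if x \in setX R (~: C) then #|C| + m else 0) +
    (if x \in setX (~: R) C then #|R| + n else 0))).
  apply: eq_bigr => -[i j] _; rewrite !in_setD !in_setX !in_setC in_pre /=.
  move: #|R| #|C| => a b.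
  have [ij_pre | ij_notin] := boolP ((i, j) \in pre).
    by rewrite (mem_rows ij_pre : i \in R) (mem_cols ij_pre : j \in C).
  by case: (i \in R); case: (j \in C); rewrite /= ?addn0.
have pre_sub : [set y in pre] \subset setX R C.
  apply/subsetP => -[i j]; rewrite in_pre in_setX => ij_pre.
  by rewrite (mem_rows ij_pre : i \in R) (mem_cols ij_pre : j \in C).
have [R_le C_le] := rows_cols_le pre.
have card_pre : #|[set y in pre]| = size pre by rewrite cardsE (card_uniqP uniq_pre).
rewrite !big_split -!big_mkcond !sum_nat_const cardsD (setIidPr pre_sub) card_pre.
rewrite !cardsX [#|~: R|]cardsCs [#|~: C|]cardsCs !setCK !card_ord.
exact: move_weight_identity (size_le_rows_cols uniq_pre) R_le C_le.
Qed.

Definition ext_numer a b r := r`! * (a + n).-1`! * (b + m).-1`!.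

Lemma ext_count_move pre r x : pre != [::] -> touches pre x ->
  ext_count (rcons pre x) r *
    ((#|rows (rcons pre x)| + #|cols (rcons pre x)|).-1`! * (m + n).-1`!) =
    ext_numer #|rows (rcons pre x)| #|cols (rcons pre x)| r ->
  ext_count (rcons pre x) r * ((#|rows pre| + #|cols pre|)`! * (m + n).-1`!) =
    move_weight pre x * ext_numer #|rows pre| #|cols pre| r.
Proof.
move=> nz_pre; rewrite /touches /move_weight /ext_numer rows_rcons cols_rcons !cardsU1.
have [] := rows_cols_gt0 nz_pre; move: #|rows pre| #|cols pre| => a b a_gt0 b_gt0.
case: (x.1 \in rows pre); case: (x.2 \in cols pre) => //= _; rewrite ?add0n ?add1n.
- by move=> IH; rewrite (@fact_predn (a + b)) ?addn_gt0 ?a_gt0 // -IH; ring.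
- by rewrite addnS => /= ->; rewrite (@fact_predn (b + m)) ?addn_gt0 ?b_gt0 //; ring.
- by move=> ->; rewrite (@fact_predn (a + n)) ?addn_gt0 ?a_gt0 //; ring.
Qed.

Lemma ext_count_closed_form r pre : uniq pre -> pre != [::] -> size pre + r = m * n ->
  ext_count pre r * ((#|rows pre| + #|cols pre|).-1`! * (m + n).-1`!) =
  ext_numer #|rows pre| #|cols pre| r.
Proof.
elim: r pre => [|r IHr] pre uniq_pre nz_pre size_pre.
  have [a_gt0 b_gt0] := rows_cols_gt0 nz_pre; have [a_le b_le] := rows_cols_le pre.
  have k_le := size_le_rows_cols uniq_pre.
  have [-> ->] : #|rows pre| = m /\ #|cols pre| = n by split; nia.
  by rewrite ext_count0 /ext_numer mul1n fact0 mul1n [n + m]addnC.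
have [a_gt0 _] := rows_cols_gt0 nz_pre.
have ab_gt0 : 0 < #|rows pre| + #|cols pre| by rewrite addn_gt0 a_gt0.
apply/eqP; rewrite -(eqn_pmul2l ab_gt0); apply/eqP.
transitivity (ext_count pre r.+1 * ((#|rows pre| + #|cols pre|)`! * (m + n).-1`!)).
  by rewrite (@fact_predn (_ + _)) //; ring.
rewrite ext_countS big_distrl /=.
rewrite (eq_bigr (fun x => move_weight pre x * ext_numer #|rows pre| #|cols pre| r));
  last first.
  move=> x /andP[x_notin touch]; apply: ext_count_move => //.
  by apply: IHr; rewrite ?rcons_uniq ?x_notin ?size_rcons ?addSnnS //; case: (pre).
by rewrite -big_distrl /= sum_move_weight // /ext_numer factS -size_pre addKn !mulnA.
Qed.

Lemma ext_count_singleton x r : r.+1 = m * n ->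
  ext_count [:: x] r * (m + n).-1`! = r`! * n`! * m`!.
Proof.
move=> size_x; have rows1 : #|rows [:: x]| = 1.
  by rewrite -(cards1 x.1); apply: eq_card => i; rewrite !inE.
have cols1 : #|cols [:: x]| = 1.
  by rewrite -(cards1 x.2); apply: eq_card => j; rewrite !inE.
have := ext_count_closed_form (pre := [:: x]) isT isT size_x.
by rewrite rows1 cols1 /ext_numer !add1n /= mul1n.
Qed.

End CompleteBipartite.

Theorem theorem2p1 (m n : nat) (hm : 0 < m) (hn : 0 < n) :
  num_shellings (Kmn_edges m n) * (m + n - 1)`! = m`! * n`! * (m * n)`!.
Proof.
have [N mnE] : exists N, m * n = N.+1 by exists (m * n).-1; rewrite prednK // muln_gt0 hm hn.
rewrite /num_shellings (card_tuples_map _ (@Kmn_edge_inj m n)); last first.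
  by move=> t /and4P[_ _ /allP t_E _] e /t_E /Kmn_edges_codom.
rewrite card_Kmn_edges mnE.
rewrite (card_tuples_cons _ (fun s => is_shelling (Kmn_edges m n) (map (@Kmn_edge m n) s))).
rewrite big_distrl subn1 /=.
rewrite (eq_bigr (fun _ => N`! * n`! * m`!)) => [|x _]; last first.
  rewrite -(ext_count_singleton x (esym mnE)); congr (_ * _); apply: eq_card => t.
  by rewrite !inE is_shelling_Kmn size_tuple mnE eqxx.
by rewrite sum_nat_const card_prod !card_ord mnE factS; ring.
Qed.
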